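(* Let $P$ be a planar point set of $n$ points in general position and $k=|\mathrm{ch}(P)|$. For every quadrangle tree $\mathcal{Q}$ for $P$, \[ V_{\max}(P)\le|\mathrm{OD}(P,\mathcal{Q})|\cdot 3^n\cdot n^k. \]
   Context: General position: no duplicates, no three collinear. $\mathrm{CH}(P)$ is the convex hull, $\mathrm{ch}(P)$ the points of $P$ on its boundary. $\mathbb{I}_P$ is the set of arrays $I_P$ of length $n$ (indices $1,\dots,n$) storing the points of $P$. A witness list of $I_P$ is $W=(a_i,b_i,c_i)_{i=1}^n\in\mathbb{Z}^{n\times3}$ with $a_i=b_i=c_i=-1$ if $I_P[i]\in\mathrm{ch}(P)$ and otherwise $I_P[i]$ in the interior of triangle $(I_P[a_i],I_P[b_i],I_P[c_i])$. $V(P,W)=\{I_P\in\mathbb{I}_P: W\text{ is a witness list of }I_P\}$ and $V_{\max}(P)=\max_{W\in\mathbb{Z}^{n\times3}}|V(P,W)|$. A rooted convex polygon $(C,p,q)$ is a convex polygon with a chosen edge $pq$; for distinct vertices $r,s$ of $C$, $C^{rs}$ is the piece of $C$ cut by line $rs$ not containing $pq$. A quadrangle tree of $(C,p,q)$ is a binary tree whose nodes store quadrangles spanned by (up to) four vertices of $C$: the root stores $p,q,s,r$ where $rs$ is an edge of $C$ (allowing $p=r$ and/or $q=s$); if $p\ne r$ the root has a child whose subtree is a quadrangle tree of $(C^{pr},p,r)$; if $q\ne s$ the root has a child whose subtree is a quadrangle tree of $(C^{qs},q,s)$. Each node's rooted edge is the chosen edge of its rooted polygon. A quadrangle tree for $P$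 is a quadrangle tree of $(\mathrm{CH}(P),p,q)$ for an edge $pq$ of $\mathrm{CH}(P)$. The population of a node is the set of points of $P$ on or inside its quadrangle except those on the line of its rooted edge; $r(x)$ denotes the node whose population contains $x$. Partial order: $x\prec_{\mathcal{Q}}y$ if $r(x)$ is a strict ancestor of $r(y)$, or $r(x)=r(y)$ and $y$ lies deeper than $x$ inside the halfplane bounded by the rooted-edge line of $r(x)$ containing its quadrangle. A downdraft is a map $\varphi:P-\mathrm{ch}(P)\to P$ with $x\prec_{\mathcal{Q}}\varphi(x)$ for all $x$; an ordered downdraft is a downdraft plus a total order on each fiber $\varphi^{-1}(\{y\})$; $\mathrm{OD}(P,\mathcal{Q})$ is the set of ordered downdrafts. *)

From HB Require Import structures.
From mathcomp Require Import all_boot all_order all_algebra.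
From mathcomp Require Import fingroup perm boolp.
Set Implicit Arguments. Unset Strict Implicit. Unset Printing Implicit Defensive.
Import Order.TTheory GRing.Theory Num.Theory.
Local Open Scope ring_scope.

Section Geometry.
Variable R : realFieldType.
Local Notation pt := (R * R)%type.

(* twice the signed area of the triangle abc *)
Definition orient (a b c : pt) : R :=
  (b.1 - a.1) * (c.2 - a.2) - (b.2 - a.2) * (c.1 - a.1).

Variable n : nat.
Implicit Types (P : 'I_n -> pt).

Definition general_position P : Prop :=
  injective P /\
  forall i j k : 'I_n, i != j -> j != k -> i != k -> orient (P i) (P j) (P k) != 0.

Definition inP P (x : pt) : Prop := exists i, P i = x.

(* x is a point of P on the boundary of CH(P): a supporting line passes through x *)
Definition on_hull P (x : pt) : Prop :=
  inP P x /\ exists u v : R, (u, v) != (0, 0) /\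
    forall i, u * (P i).1 + v * (P i).2 <= u * x.1 + v * x.2.

Definition hull_count P : nat := #|[set i : 'I_n | `[< on_hull P (P i) >] ]|.

Definition in_open_triangle (a b c x : pt) : Prop :=
  (0 < orient a b x /\ 0 < orient b c x /\ 0 < orient c a x) \/
  (orient a b x < 0 /\ orient b c x < 0 /\ orient c a x < 0).

(* Arrays I_P are encoded by permutations sig : the array stores P (sig i) at
   (1-based) index i+1.  W i is the triple (a_{i+1}, b_{i+1}, c_{i+1});
   its entries are 1-based indices into the array. *)
Definition is_witness P (W : 'I_n -> int * int * int) (sig : {perm 'I_n}) : Prop :=
  forall i : 'I_n,
    (on_hull P (P (sig i)) -> W i = (-1, -1, -1)) /\
    (~ on_hull P (P (sig i)) ->
       exists ia ib ic : 'I_n,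
         W i = ((ia.+1)%:Z, (ib.+1)%:Z, (ic.+1)%:Z) /\
         in_open_triangle (P (sig ia)) (P (sig ib)) (P (sig ic)) (P (sig i))).

Definition Vcard P (W : 'I_n -> int * int * int) : nat :=
  #|[set sig : {perm 'I_n} | `[< is_witness P W sig >] ]|.

(* A node stores p q s r (quadrangle p,q,s,r with rooted edge pq), an optional
   child for side pr (rooted at (p,r)) and an optional child for side qs
   (rooted at (q,s)). *)
Inductive qtree :=
  QNode of pt & pt & pt & pt & option qtree & option qtree.

(* convex polygons are given by their vertex sets (predicates on points) *)
(* rs is an edge of C, oriented so that p,q,s,r is the quadrangle order:
   C lies (weakly) on the same side of the directed lines p->q and s->r. *)
Definition edge_ok (C : pt -> Prop) (p q s r : pt) : Prop :=
  C s /\ C r /\ s <> r /\ ~ (s = p /\ r = q) /\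
  exists sg : R, (sg = 1 \/ sg = -1) /\
    forall x, C x -> 0 <= sg * orient p q x /\ 0 <= sg * orient s r x.

(* C^{ab}: the piece of C cut by line ab not containing the rooted edge,
   o being the endpoint of the rooted edge not on line ab *)
Definition cut (C : pt -> Prop) (a b o : pt) : pt -> Prop :=
  fun x => C x /\ orient a b x * orient a b o <= 0.

Fixpoint qvalid (t : qtree) (C : pt -> Prop) (p q : pt) : Prop :=
  match t with
  | QNode p' q' s r l rr =>
      p' = p /\ q' = q /\ edge_ok C p q s r /\
      match l with
      | None => p = r
      | Some tl => p <> r /\ qvalid tl (cut C p r q) p r
      end /\
      match rr with
      | None => q = s
      | Some tr => q <> s /\ qvalid tr (cut C q s p) q s
      end
  end.

Definition hull_edge P (p q : pt) : Prop :=
  on_hull P p /\ on_hull P q /\ p <> q /\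
  exists sg : R, (sg = 1 \/ sg = -1) /\ forall i, 0 <= sg * orient p q (P i).

Definition qtree_for P (t : qtree) : Prop :=
  exists p q, hull_edge P p q /\ qvalid t (on_hull P) p q.

(* nodes are addressed by paths: false = child of side pr, true = child of side qs *)
Fixpoint subtree (t : qtree) (pi : seq bool) : option qtree :=
  match pi with
  | [::] => Some t
  | b :: pi' =>
      match t with
      | QNode _ _ _ _ l rr =>
          match (if b then rr else l) with
          | Some t' => subtree t' pi'
          | None => None
          end
      end
  end.

Definition in_quad (p q s r x : pt) : Prop :=
  exists a b c d : R, 0 <= a /\ 0 <= b /\ 0 <= c /\ 0 <= d /\ a + b + c + d = 1 /\
    x = (a * p.1 + b * q.1 + c * s.1 + d * r.1, a * p.2 + b * q.2 + c * s.2 + d * r.2).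

Definition pop P (t : qtree) (pi : seq bool) (x : pt) : Prop :=
  exists p q s r l rr, subtree t pi = Some (QNode p q s r l rr) /\
    inP P x /\ in_quad p q s r x /\ orient p q x != 0.

Definition deeper (t : qtree) (pi : seq bool) (x y : pt) : Prop :=
  exists p q s r l rr, subtree t pi = Some (QNode p q s r l rr) /\
    `|orient p q x| < `|orient p q y|.

Definition qprec P (t : qtree) (x y : pt) : Prop :=
  exists pix piy, pop P t pix x /\ pop P t piy y /\
    ((prefix pix piy /\ pix <> piy) \/ (pix = piy /\ deeper t pix x y)).

(* Ordered downdrafts, encoded as (phi, rho): phi is the downdraft on indices
   (normalised to the identity on hull points, where it is not defined), rho is
   the union of the total orders (reflexive) on the fibers of phi. *)
Definition ord_downdraft P (t : qtree)
    (d : {ffun 'I_n -> 'I_n} * {ffun 'I_n * 'I_n -> bool}) : Prop :=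
  let phi := d.1 in let rho := fun i j => d.2 (i, j) in
  let intr := fun i => ~ on_hull P (P i) in
  (forall i, intr i -> qprec P t (P i) (P (phi i))) /\
  (forall i, ~ intr i -> phi i = i) /\
  (forall i j, rho i j -> intr i /\ intr j /\ phi i = phi j) /\
  (forall i j k, intr i -> intr j -> intr k -> phi i = phi j -> phi j = phi k ->
     [/\ rho i i, (rho i j -> rho j i -> i = j),
         (rho i j -> rho j k -> rho i k) & (rho i j \/ rho j i)]).

Definition ODcard P (t : qtree) : nat :=
  #|[set d : {ffun 'I_n -> 'I_n} * {ffun 'I_n * 'I_n -> bool} |
      `[< ord_downdraft P t d >] ]|.

End Geometry.

From HB Require Import structures.
From mathcomp Require Import all_boot all_order all_algebra.
From mathcomp Require Import fingroup perm boolp.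
From mathcomp Require Import ring lra zify.
Set Implicit Arguments. Unset Strict Implicit. Unset Printing Implicit Defensive.
Import Order.TTheory GRing.Theory Num.Theory.
Local Open Scope ring_scope.

(* Every array of V(P,W) is encoded injectively by an ordered downdraft, one
   label in {0,1,2} per slot, and the slots of the k hull points.  By its
   witness, an interior point x lies in an open triangle of three points of P.
   One of these vertices lies strictly deeper than x in the halfplane of the
   quadrangle-tree node containing x, so it belongs to that node or to a
   descendant: it is above x for a strict order refining the tree order.  The
   label says which vertex it is, the downdraft sends x to it, and each fiber
   is ordered by array position.  Decoding goes by induction along the strict
   order: hull slots are stored, and once the slot of the image of x is known,
   the labels and the fiber order determine the slot of x.
   The geometric input is that every point of P is a convex combination of
   hull points (the witness triangles let us remove interior points one by
   one), and that the polygon of each node is exactly the set of hull points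
   on the inner side of its rooted edge. *)

Section Orientation.
Variable R : realFieldType.
Local Notation pt := (R * R)%type.
Implicit Types (a b c p q x : pt) (m : R).

Lemma pt_ext a b : a.1 = b.1 -> a.2 = b.2 -> a = b.
Proof. by case: a b => [? ?] [? ?] /= -> ->. Qed.

Lemma orient_swap p q x : orient q p x = - orient p q x.
Proof. rewrite /orient; ring. Qed.

Lemma orient_rot a b c : orient a b c = orient b c a.
Proof. rewrite /orient; ring. Qed.

Lemma orient_aba a b : orient a b a = 0.
Proof. rewrite /orient; ring. Qed.

Lemma orient_abb a b : orient a b b = 0.
Proof. rewrite /orient; ring. Qed.

Lemma orient_level p q x u v : (u, v) != (0, 0) ->
  u * q.1 + v * q.2 = u * p.1 + v * p.2 ->
  u * x.1 + v * x.2 = u * p.1 + v * p.2 -> orient p q x = 0.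
Proof.
move=> uv eq ex; apply/eqP; apply: contraT => o0.
have /eqP : u * orient p q x = 0.
  have -> : u * orient p q x = ((u * q.1 + v * q.2) - (u * p.1 + v * p.2)) * (x.2 - p.2)
     - (q.2 - p.2) * ((u * x.1 + v * x.2) - (u * p.1 + v * p.2)) by rewrite /orient; ring.
  by rewrite eq ex subrr mul0r mulr0 subrr.
have /eqP : v * orient p q x = 0.
  have -> : v * orient p q x = (q.1 - p.1) * ((u * x.1 + v * x.2) - (u * p.1 + v * p.2))
     - ((u * q.1 + v * q.2) - (u * p.1 + v * p.2)) * (x.1 - p.1) by rewrite /orient; ring.
  by rewrite eq ex subrr mul0r mulr0 subrr.
rewrite !mulf_eq0 (negbTE o0) !orbF => /eqP v0 /eqP u0.
by move: uv; rewrite u0 v0 eqxx.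
Qed.

Definition comb m a b : pt := (m * a.1 + (1 - m) * b.1, m * a.2 + (1 - m) * b.2).

Lemma orient_comb p q m a b :
  orient p q (comb m a b) = m * orient p q a + (1 - m) * orient p q b.
Proof. rewrite /orient /comb /=; ring. Qed.

Lemma comb_comb m1 m2 a b : comb m1 a (comb m2 a b) = comb (m1 + (1 - m1) * m2) a b.
Proof. apply: pt_ext => /=; ring. Qed.

Lemma comb_swap m a b : comb m a b = comb (1 - m) b a.
Proof. apply: pt_ext => /=; ring. Qed.

Lemma comb1 a b : comb 1 a b = a.
Proof. apply: pt_ext => /=; ring. Qed.

Lemma comb_inj a b : a <> b -> injective (fun m => comb m a b).
Proof.
move=> ab m1 m2 e; apply/eqP; apply: contraT => m12; case: ab.
have d : m1 - m2 != 0 by rewrite subr_eq0.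
have h1 : (m1 - m2) * (a.1 - b.1) = (comb m1 a b).1 - (comb m2 a b).1 by rewrite /=; ring.
have h2 : (m1 - m2) * (a.2 - b.2) = (comb m1 a b).2 - (comb m2 a b).2 by rewrite /=; ring.
move: h1 h2; rewrite e !subrr => /eqP + /eqP.
by rewrite !mulf_eq0 (negbTE d) /= !subr_eq0 => /eqP ? /eqP ?; apply: pt_ext.
Qed.

Lemma orient_eq0_comb p q x : p <> q -> orient p q x = 0 -> exists m, x = comb m p q.
Proof.
move=> pq o0.
have [d1|d1] := eqVneq (q.1 - p.1) 0; last first.
  pose s := (x.1 - p.1) / (q.1 - p.1).
  exists (1 - s); apply: pt_ext => /=; first by rewrite /s; field.
  have : x.2 - ((1 - s) * p.2 + (1 - (1 - s)) * q.2) = orient p q x / (q.1 - p.1).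
    by rewrite /s /orient; field.
  by rewrite o0 mul0r => /eqP; rewrite subr_eq0 => /eqP.
have d2 : q.2 - p.2 != 0.
  by apply/eqP => e; apply: pq; apply: pt_ext; apply/eqP; rewrite eq_sym -subr_eq0 ?d1 ?e.
pose s := (x.2 - p.2) / (q.2 - p.2).
exists (1 - s); apply: pt_ext => /=; last by rewrite /s; field.
have : x.1 - ((1 - s) * p.1 + (1 - (1 - s)) * q.1) = - orient p q x / (q.2 - p.2).
  by rewrite /s /orient; field.
by rewrite o0 oppr0 mul0r => /eqP; rewrite subr_eq0 => /eqP.
Qed.

Lemma comb_root p q k a b : 0 < k * orient p q a -> k * orient p q b < 0 ->
  exists2 m, 0 <= m < 1 & orient p q (comb m a b) = 0.
Proof.
move=> fa fb; have d : k * orient p q a - k * orient p q b != 0 by apply/eqP; lra.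
exists (- (k * orient p q b) / (k * orient p q a - k * orient p q b)).
  by apply/andP; split; [apply: divr_ge0 | rewrite ltr_pdivrMr]; lra.
by rewrite orient_comb; field.
Qed.

Lemma comb_through_root p q k a b m : 0 < k * orient p q a -> k * orient p q b < 0 ->
  0 <= m <= 1 -> 0 <= k * orient p q (comb m a b) ->
  exists la mu, [/\ 0 <= la <= 1, 0 <= mu <= 1, orient p q (comb la a b) = 0
                  & comb m a b = comb mu a (comb la a b)].
Proof.
move=> fa fb /andP [m0 m1] fm; have [la /andP [la0 la1] o0] := comb_root fa fb.
have o0k : la * (k * orient p q a) + (1 - la) * (k * orient p q b) = 0.
  by rewrite -[RHS](mulr0 k) -o0 orient_comb; ring.
rewrite orient_comb in fm.
have lam : la <= m by nra.
exists la, ((m - la) / (1 - la)); split => //.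
- by apply/andP; lra.
- by apply/andP; split; [apply: divr_ge0 | rewrite ler_pdivrMr]; lra.
- by rewrite comb_comb; congr comb; field; lra.
Qed.

End Orientation.

Lemma sum_support2 (V : nmodType) (I : finType) (F : I -> V) a b : a != b ->
  (forall i, i != a -> i != b -> F i = 0) -> \sum_i F i = F a + F b.
Proof.
move=> ab F0; rewrite (bigD1 a) //= (bigD1 b) 1?eq_sym //= big1 ?addr0 // => i /andP [].
exact: F0.
Qed.

Section ConvexCombinations.
Variables (R : realFieldType) (n : nat) (P : 'I_n -> R * R).
Hypothesis gp : general_position P.
Local Notation pt := (R * R)%type.

Lemma orient_neq0 (a b c : pt) : inP P a -> inP P b -> inP P c ->
  a <> b -> b <> c -> a <> c -> orient a b c != 0.
Proof.
case=> i <- [j <-] [k <-] hij hjk hik; apply: gp.2;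
  apply/eqP => e; [apply: hij|apply: hjk|apply: hik]; by rewrite e.
Qed.

Lemma orient_eq0_endpoint (a b c : pt) : inP P a -> inP P b -> inP P c -> a <> b ->
  orient a b c = 0 -> c = a \/ c = b.
Proof.
move=> ha hb hc ab o0; have [->|ca] := eqVneq c a; first by left.
have [->|cb] := eqVneq c b; first by right.
have := orient_neq0 ha hb hc ab (nesym (elimN eqP cb)) (nesym (elimN eqP ca)).
by rewrite o0 eqxx.
Qed.

Definition wpt (l : 'I_n -> R) : pt := (\sum_i l i * (P i).1, \sum_i l i * (P i).2).

Definition conv (C : pt -> Prop) (z : pt) : Prop :=
  exists l : 'I_n -> R,
    [/\ forall i, 0 <= l i, forall i, l i != 0 -> C (P i), \sum_i l i = 1 & z = wpt l].

Lemma linear_wpt u v l :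
  u * (wpt l).1 + v * (wpt l).2 = \sum_i l i * (u * (P i).1 + v * (P i).2).
Proof. by rewrite /wpt /= !mulr_sumr -big_split; apply: eq_bigr => i _ /=; ring. Qed.

Lemma orient_wpt p q l : \sum_i l i = 1 ->
  orient p q (wpt l) = \sum_i l i * orient p q (P i).
Proof.
move=> l1; have oE x : orient p q x = ((p.2 - q.2) * x.1 + (q.1 - p.1) * x.2)
    + ((q.2 - p.2) * p.1 - (q.1 - p.1) * p.2) by rewrite /orient; ring.
rewrite oE linear_wpt -[X in _ + X]mul1r -l1 mulr_suml -big_split.
by apply: eq_bigr => i _ /=; rewrite oE; ring.
Qed.

Lemma wpt_le l u v m : (forall i, 0 <= l i) -> \sum_i l i = 1 ->
  (forall i, u * (P i).1 + v * (P i).2 <= m) -> u * (wpt l).1 + v * (wpt l).2 <= m.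
Proof.
move=> l0 l1 le; rewrite linear_wpt -[m]mul1r -l1 mulr_suml.
by apply: ler_sum => i _; apply: ler_wpM2l.
Qed.

Lemma wpt_level l u v m : (forall i, 0 <= l i) -> \sum_i l i = 1 ->
  (forall i, u * (P i).1 + v * (P i).2 <= m) -> u * (wpt l).1 + v * (wpt l).2 = m ->
  forall i, l i != 0 -> u * (P i).1 + v * (P i).2 = m.
Proof.
move=> l0 l1 le e i li.
have gap : \sum_j l j * (m - (u * (P j).1 + v * (P j).2)) = 0.
  transitivity (m * \sum_j l j - \sum_j l j * (u * (P j).1 + v * (P j).2)).
    by rewrite mulr_sumr -sumrB; apply: eq_bigr => j _; ring.
  by rewrite l1 mulr1 -linear_wpt e subrr.
have term_ge0 j : 0 <= l j * (m - (u * (P j).1 + v * (P j).2)).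
  by rewrite mulr_ge0 // subr_ge0.
have := psumr_eq0P (fun j _ => term_ge0 j) gap (i := i) isT.
by move/eqP; rewrite mulf_eq0 (negbTE li) subr_eq0 => /eqP.
Qed.

Lemma conv_mono (C C' : pt -> Prop) z : (forall x, C x -> C' x) -> conv C z -> conv C' z.
Proof. by move=> CC' [l [l0 lC l1 ez]]; exists l; split=> // i /lC /CC'. Qed.

Lemma conv_inP (C : pt -> Prop) x : C x -> inP P x -> conv C x.
Proof.
move=> Cx [i ex]; exists (fun j => (j == i)%:R); split.
- by move=> j; case: (j == i).
- by move=> j; have [->|] := eqVneq j i; rewrite ?ex ?eqxx.
- by rewrite (bigD1 i) //= eqxx big1 ?addr0 // => j /negbTE ->.
- rewrite -ex; apply: pt_ext; rewrite /= (bigD1 i) //= eqxx mul1r big1 ?addr0 //;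
    by move=> j /negbTE ->; rewrite mul0r.
Qed.

Lemma conv_comb (C : pt -> Prop) m a b : conv C a -> conv C b -> 0 <= m <= 1 ->
  conv C (comb m a b).
Proof.
move=> [la [la0 laC la1 ->]] [lb [lb0 lbC lb1 ->]] /andP [m0 m1].
exists (fun i => m * la i + (1 - m) * lb i); split.
- by move=> i; apply: addr_ge0; apply: mulr_ge0 => //; lra.
- move=> i; have [ha|/laC //] := eqVneq (la i) 0; have [hb|/lbC //] := eqVneq (lb i) 0.
  by rewrite ha hb !mulr0 addr0 eqxx.
- by rewrite big_split /= -!mulr_sumr la1 lb1; ring.
- by apply: pt_ext; rewrite /= !mulr_sumr -big_split /=; apply: eq_bigr => i _; ring.
Qed.

Lemma conv_orient_ge0 (C : pt -> Prop) z k p q : conv C z ->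
  (forall x, C x -> 0 <= k * orient p q x) -> 0 <= k * orient p q z.
Proof.
case=> l [l0 lC l1 ->] hC; rewrite orient_wpt // mulr_sumr; apply: sumr_ge0 => i _.
rewrite mulrCA; have [->|/lC/hC] := eqVneq (l i) 0; first by rewrite mul0r.
exact: mulr_ge0.
Qed.

Lemma conv_not_beyond_hull (p q w : pt) m : inP P p -> on_hull P q -> p <> q ->
  conv (inP P) w -> w = comb m q p -> m <= 1.
Proof.
move=> [ip ep] [[iq eq] [u [v [uv hu]]]] pq [l [l0 _ l1 ew]] ewm.
rewrite leNgt; apply/negP => m1.
pose g (x : pt) := u * x.1 + v * x.2.
have gpq : g p <= g q by rewrite -ep; apply: hu.
have gw : g w <= g q by rewrite ew; apply: wpt_le.
have gwE : g w = m * g q + (1 - m) * g p by rewrite ewm /g /comb /=; ring.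
have gpq_eq : g p = g q by nra.
have gwq : g w = g q by rewrite gwE gpq_eq; ring.
have on_pq i : l i != 0 -> i = ip \/ i = iq.
  move=> li; have gi := wpt_level l0 l1 hu (etrans (congr1 g (esym ew)) gwq) li.
  have /(orient_eq0_endpoint (ex_intro _ ip ep) (ex_intro _ iq eq) (ex_intro _ i erefl) pq) :
      orient p q (P i) = 0.
    by apply: (orient_level uv); [exact: esym gpq_eq | exact: etrans gi (esym gpq_eq)].
  by case=> e; [left|right]; apply: gp.1; rewrite e.
have ipq : ip != iq by apply/eqP => e; apply: pq; rewrite -ep -eq e.
have l0' i : i != ip -> i != iq -> l i = 0.
  by move=> hp hq; apply/eqP; apply: contraT => /on_pq [] e; [move: hp|move: hq]; rewrite e eqxx.
have lpq : l ip + l iq = 1 by rewrite -l1 (sum_support2 ipq l0').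
have wE : w = comb (l ip) p q.
  rewrite ew; apply: pt_ext; rewrite /= (sum_support2 ipq) ?ep ?eq;
    by [congr (_ + _); congr (_ * _); lra | move=> i hp hq; rewrite l0' ?mul0r].
have := comb_inj pq (etrans (esym wE) (etrans ewm (comb_swap _ _ _))).
by have := l0 ip; lra.
Qed.

Lemma conv_hull_segment (p q w : pt) : on_hull P p -> on_hull P q -> p <> q ->
  conv (inP P) w -> orient p q w = 0 -> exists2 m, 0 <= m <= 1 & w = comb m p q.
Proof.
move=> hp hq pq hw o0; have [m em] := orient_eq0_comb pq o0.
exists m => //; apply/andP; split; last exact: conv_not_beyond_hull hq.1 hp (nesym pq) hw em.
have := conv_not_beyond_hull hp.1 hq pq hw (etrans em (comb_swap _ _ _)); lra.
Qed.

End ConvexCombinations.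

Section HalfplaneCut.
Variables (R : realFieldType) (n : nat) (P : 'I_n -> R * R).
Hypothesis gp : general_position P.
Local Notation pt := (R * R)%type.
Local Notation wpt := (wpt P).
Local Notation conv := (conv P).

Lemma conv_normalize (C : pt -> Prop) (w : 'I_n -> R) : (forall i, 0 <= w i) ->
  (forall i, w i != 0 -> C (P i)) -> 0 < \sum_i w i ->
  conv C (wpt (fun i => w i / \sum_j w j)).
Proof.
move=> w0 wC s0; exists (fun i => w i / \sum_j w j); split => //.
- by move=> i; rewrite divr_ge0 // ltW.
- by move=> i; rewrite mulf_eq0 negb_or => /andP [/wC].
- by rewrite -mulr_suml divff // gt_eqF.
Qed.

Lemma orient_normalize p q (w : 'I_n -> R) : 0 < \sum_i w i ->
  orient p q (wpt (fun i => w i / \sum_j w j)) =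
  (\sum_i w i * orient p q (P i)) / \sum_i w i.
Proof.
move=> s0; rewrite orient_wpt; last by rewrite -mulr_suml divff // gt_eqF.
by rewrite mulr_suml; apply: eq_bigr => i _; rewrite mulrAC.
Qed.

Lemma wpt_split (w1 w2 : 'I_n -> R) : 0 < \sum_i w1 i -> 0 < \sum_i w2 i ->
  \sum_i w1 i + \sum_i w2 i = 1 ->
  wpt (fun i => w1 i + w2 i) = comb (\sum_i w1 i)
    (wpt (fun i => w1 i / \sum_j w1 j)) (wpt (fun i => w2 i / \sum_j w2 j)).
Proof.
move=> s1 s2 s12; have e : 1 - \sum_i w1 i = \sum_i w2 i by lra.
by apply: pt_ext; rewrite /= e !mulr_sumr -big_split /=; apply: eq_bigr => i _;
  field; rewrite !gt_eqF.
Qed.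

Definition pos_part (l F : 'I_n -> R) i : R := if 0 <= F i then l i else 0.
Definition neg_part (l F : 'I_n -> R) i : R := if 0 <= F i then 0 else l i.

Lemma parts_sum (l F : 'I_n -> R) : l = (fun i => pos_part l F i + neg_part l F i).
Proof. by apply: funext => i; rewrite /pos_part /neg_part; case: ifP; rewrite ?addr0 ?add0r. Qed.

Lemma parts_sign (l F : 'I_n -> R) j : (forall i, 0 <= l i) -> l j != 0 -> F j < 0 ->
  0 <= \sum_i l i * F i ->
  [/\ 0 < \sum_i pos_part l F i, 0 < \sum_i neg_part l F i,
      0 < \sum_i pos_part l F i * F i & \sum_i neg_part l F i * F i < 0].
Proof.
move=> l0 lj Fj S0; have lj0 : 0 < l j by rewrite lt_def lj l0.
have nj : neg_part l F j = l j by rewrite /neg_part leNgt Fj.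
have F2 : \sum_i neg_part l F i * F i < 0.
  rewrite -oppr_gt0 -sumrN (bigD1 j) //= ltr_pwDl ?nj ?oppr_gt0 ?pmulr_rlt0 //.
  apply: sumr_ge0 => i _; rewrite oppr_ge0 /neg_part; case: ifP => [_|/negbT]; rewrite ?mul0r //.
  by rewrite -ltNge => /ltW; exact: mulr_ge0_le0 (l0 i).
have F12 : \sum_i l i * F i = \sum_i pos_part l F i * F i + \sum_i neg_part l F i * F i.
  by rewrite -big_split {1}(parts_sum l F); apply: eq_bigr => i _; rewrite mulrDl.
have F1 : 0 < \sum_i pos_part l F i * F i by lra.
have p0 i : 0 <= pos_part l F i by rewrite /pos_part; case: ifP.
have n0 i : 0 <= neg_part l F i by rewrite /neg_part; case: ifP.
split => //.
- rewrite lt_def sumr_ge0 // andbT; apply: contraTneq F1 => /(psumr_eq0P (fun i _ => p0 i)) z.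
  by rewrite big1 ?ltxx // => i _; rewrite z ?mul0r.
- by rewrite (bigD1 j) //= ltr_pwDl ?nj // sumr_ge0.
Qed.

Lemma conv_split_halfplane (C : pt -> Prop) p r k z :
  conv C z -> 0 <= k * orient p r z ->
  conv (fun x => C x /\ 0 <= k * orient p r x) z \/
  exists a b m, [/\ conv (fun x => C x /\ 0 <= k * orient p r x) a, conv C b,
    0 < k * orient p r a, k * orient p r b < 0 & 0 <= m <= 1 /\ z = comb m a b].
Proof.
case=> l [l0 lC l1 ->] fz; pose F i := k * orient p r (P i).
have [j /andP [Fj lj]|allpos] := pickP (fun i => (F i < 0) && (l i != 0)); last first.
  left; exists l; split => // i li; split; first exact: lC.
  by move: (allpos i); rewrite li andbT => /negbT; rewrite -leNgt.
right; have {}fz : 0 <= \sum_i l i * F i.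
  by move: fz; rewrite orient_wpt // mulr_sumr; under eq_bigr do rewrite mulrCA.
have [s1 s2 F1 F2] := parts_sign l0 lj Fj fz.
set w1 := pos_part l F in s1 F1 *; set w2 := neg_part l F in s2 F2 *.
have s12 : \sum_i w1 i + \sum_i w2 i = 1 by rewrite -big_split -l1 [in RHS](parts_sum l F).
exists (wpt (fun i => w1 i / \sum_j w1 j)), (wpt (fun i => w2 i / \sum_j w2 j)), (\sum_i w1 i).
split.
- apply: conv_normalize => [i|i|//]; rewrite /w1 /pos_part; case: ifP => // _; rewrite ?eqxx //.
  by move=> li; split => //; exact: lC.
- apply: conv_normalize => [i|i|//]; rewrite /w2 /neg_part; case: ifP => // _; rewrite ?eqxx //.
  exact: lC.
- rewrite orient_normalize // mulrA mulr_sumr divr_gt0 //.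
  by under eq_bigr do rewrite mulrCA.
- rewrite orient_normalize // mulrA mulr_sumr pmulr_llt0 ?invr_gt0 //.
  by under eq_bigr do rewrite mulrCA.
- by split; [apply/andP; lra | rewrite {1}(parts_sum l F) wpt_split].
Qed.

Lemma cut_iff (C : pt -> Prop) p r o x :
  cut C p r o x <-> C x /\ 0 <= - orient p r o * orient p r x.
Proof. by rewrite /cut mulNr oppr_ge0 mulrC. Qed.

Lemma conv_cut (C : pt -> Prop) p r o z : (forall x, C x -> on_hull P x) ->
  C p -> C r -> p <> r -> conv C z -> orient p r z * orient p r o <= 0 ->
  conv (cut C p r o) z.
Proof.
move=> CH Cp Cr pr cz; rewrite -oppr_ge0 -mulrN mulrC => fz.
apply: conv_mono (fun x => proj2 (cut_iff C p r o x)) _.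
have [//|[a [b [m [ca cb fa fb [m01 ez]]]]]] := conv_split_halfplane cz fz.
rewrite ez in fz *.
have [la [mu [la01 mu01 wl ->]]] := comb_through_root fa fb m01 fz.
have cw : conv C (comb la a b) by apply: conv_comb => //; apply: conv_mono ca => x [].
have CP x : C x -> inP P x by move/CH => [].
have [th th01 ->] := conv_hull_segment gp (CH p Cp) (CH r Cr) pr (conv_mono CP cw) wl.
apply: conv_comb => //; apply: conv_comb => //; apply: conv_inP;
  rewrite ?orient_aba ?orient_abb ?mulr0; by [split | apply: CP].
Qed.

End HalfplaneCut.

Lemma sign_neq0 (R : numDomainType) (sg : R) : sg = 1 \/ sg = -1 -> sg != 0.
Proof. by case=> ->; rewrite ?oppr_eq0 oner_eq0. Qed.

Lemma sign_mul_gt0 (R : numDomainType) (sg x : R) : sg = 1 \/ sg = -1 ->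
  0 <= sg * x -> x != 0 -> 0 < sg * x.
Proof. by move=> /sign_neq0 sg0 h x0; rewrite lt_def h mulf_neq0. Qed.

Section RootedPieces.
Variables (R : realFieldType) (n : nat) (P : 'I_n -> R * R).
Hypothesis gp : general_position P.
Local Notation pt := (R * R)%type.
Local Notation conv := (conv P).

(* The invariant satisfied by the polygon C of every quadrangle-tree node with
   rooted edge pq; the sign k selects the side of pq on which C lies. *)
Record rooted_piece (C : pt -> Prop) (p q : pt) (k : R) : Prop := RootedPiece {
  piece_p : C p;
  piece_q : C q;
  piece_neq : p <> q;
  piece_sign : k != 0;
  pieceE : forall x, C x <-> on_hull P x /\ 0 <= k * orient p q x;
  piece_conv : forall z, inP P z -> 0 <= k * orient p q z -> conv C z }.

Lemma piece_hull C p q k : rooted_piece C p q k -> forall x, C x -> on_hull P x.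
Proof. by move=> G x /(pieceE G x) []. Qed.

Lemma piece_inP C p q k : rooted_piece C p q k -> forall x, C x -> inP P x.
Proof. by move=> G x /(piece_hull G) []. Qed.

Lemma rooted_piece_swap C p q k : rooted_piece C p q k -> rooted_piece C q p (- k).
Proof.
case=> Cp Cq pq k0 CE Cconv; constructor; rewrite ?oppr_eq0 //.
- exact: nesym.
- by move=> x; rewrite orient_swap mulrNN.
- by move=> z; rewrite orient_swap mulrNN; apply: Cconv.
Qed.

Lemma edge_ok_swap (C : pt -> Prop) p q s r : edge_ok C p q s r -> edge_ok C q p r s.
Proof.
case=> Cs [Cr [sr [nsp [sg [hsg hC]]]]]; do 3 (split => //); first exact: nesym.
split; first by case=> e1 e2; apply: nsp.
exists (- sg); split; first by case: hsg => ->; [right|left]; rewrite ?opprK.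
by move=> x /hC []; rewrite (orient_swap p) (orient_swap s) !mulrNN.
Qed.

Lemma edge_ok_neq C p q k s r : rooted_piece C p q k -> edge_ok C p q s r -> r <> q.
Proof.
move=> G [Cs [Cr [sr [nsp [sg [hsg hE]]]]]] rq; subst r.
have sp : s <> p by move=> e; apply: nsp.
have h1 := (hE p (piece_p G)).2; have h2 := (hE s Cs).1.
rewrite orient_rot orient_swap mulrN oppr_ge0 in h1.
apply/negP: (orient_neq0 gp (piece_inP G (piece_p G)) (piece_inP G (piece_q G)) (piece_inP G Cs)
  (piece_neq G) (nesym sr) (nesym sp)).
by rewrite -(mulrI_eq0 _ (lregP (sign_neq0 hsg))) eq_le h1 h2.
Qed.

(* Otherwise the segment from r to z would cross line pq, within [p, q] by
   convexity; the side condition on z forces the crossing point to be p, which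
   puts z on the line pr. *)
Lemma piece_cut_side C p q k r z : rooted_piece C p q k -> C r -> r <> p -> r <> q ->
  inP P z -> orient p r z * orient p r q <= 0 -> 0 <= k * orient p q z.
Proof.
move=> G Cr rp rq iz hz; rewrite leNgt; apply/negP => dz.
have ip := piece_inP G (piece_p G); have iq := piece_inP G (piece_q G).
have ir := piece_inP G Cr.
have dr : 0 < k * orient p q r.
  have k0 := piece_sign G; have o0 := orient_neq0 gp ip iq ir (piece_neq G) (nesym rq) (nesym rp).
  by rewrite lt_def ((pieceE G r).1 Cr).2 andbT mulf_neq0.
have [la /andP [la0 la1] ow] := comb_root dr dz.
have cw : conv (inP P) (comb la r z) by apply: conv_comb; rewrite ?la0 ?ltW //; apply: conv_inP.
have [th /andP [th0 th1] ew] :=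
  conv_hull_segment gp (piece_hull G (piece_p G)) (piece_hull G (piece_q G)) (piece_neq G) cw ow.
have prq := orient_neq0 gp ip ir iq (nesym rp) rq (piece_neq G).
have th_eq1 : th = 1.
  have := congr1 (fun x => orient p r x * orient p r q) ew.
  have : 0 < orient p r q ^+ 2 by rewrite exprn_even_gt0.
  by rewrite /= !orient_comb orient_abb orient_aba; nra.
have : orient p r (comb la r z) = 0 by rewrite ew th_eq1 comb1 orient_aba.
rewrite orient_comb orient_abb mulr0 add0r => /eqP; rewrite mulf_eq0 subr_eq0 (gt_eqF la1) /=.
move=> /eqP /(orient_eq0_endpoint gp ip ir iz (nesym rp)).
by case=> ez; move: dz; rewrite ez ?orient_aba ?mulr0 ?ltxx //; move: dr; lra.
Qed.

Lemma rooted_piece_cut C p q k s r : rooted_piece C p q k -> edge_ok C p q s r -> p <> r ->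
  rooted_piece (cut C p r q) p r (- orient p r q).
Proof.
move=> G E pr; have rq := edge_ok_neq G E; have [Cs [Cr _]] := E.
have side x : inP P x -> 0 <= - orient p r q * orient p r x -> 0 <= k * orient p q x.
  move=> ix hx; apply: piece_cut_side G Cr (nesym pr) rq ix _.
  by move: hx; rewrite mulNr oppr_ge0 mulrC.
constructor.
- by apply/cut_iff; rewrite orient_aba mulr0; split => //; exact: piece_p G.
- by apply/cut_iff; rewrite orient_abb mulr0.
- exact: pr.
- rewrite oppr_eq0; exact (orient_neq0 gp (piece_inP G (piece_p G)) (piece_inP G Cr)
    (piece_inP G (piece_q G)) pr rq (piece_neq G)).
- move=> x; rewrite cut_iff; split=> [[Cx hx]|[Hx hx]].
    by split=> //; exact (piece_hull G Cx).
  by split=> //; apply/(pieceE G x); split=> //; apply: side hx; case: Hx.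
- move=> z iz hz; refine (conv_cut gp (piece_hull G) (piece_p G) Cr pr _ _).
    exact: piece_conv G z iz (side z iz hz).
  by move: hz; rewrite mulNr oppr_ge0 mulrC.
Qed.

End RootedPieces.

Section Triangles.
Variable R : realFieldType.
Local Notation pt := (R * R)%type.

Definition in_tri (a b c x : pt) : Prop := exists al be ga : R,
  [/\ 0 <= al, 0 <= be, 0 <= ga, al + be + ga = 1 &
     x = (al * a.1 + be * b.1 + ga * c.1, al * a.2 + be * b.2 + ga * c.2)].

Lemma orient_sum3 (a b c x : pt) :
  orient b c x + orient c a x + orient a b x = orient a b c.
Proof. rewrite /orient; ring. Qed.

Lemma bary_weights (a b c x : pt) (sg : R) : sg = 1 \/ sg = -1 -> 0 < sg * orient a b c ->
  exists al be ga : R, [/\ al * (sg * orient a b c) = sg * orient b c x,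
    be * (sg * orient a b c) = sg * orient c a x,
    ga * (sg * orient a b c) = sg * orient a b x,
    al + be + ga = 1 &
    x = (al * a.1 + be * b.1 + ga * c.1, al * a.2 + be * b.2 + ga * c.2)].
Proof.
move=> hsg T0; have T0' : orient a b c != 0 by apply: contraTneq T0 => ->; rewrite mulr0 ltxx.
exists (orient b c x / orient a b c), (orient c a x / orient a b c),
  (orient a b x / orient a b c).
split; try by rewrite mulrCA divfK.
- by rewrite -!mulrDl orient_sum3 divff.
- by apply: pt_ext; rewrite /orient /=; field.
Qed.

Lemma in_tri_of_orient (a b c x : pt) (sg : R) : sg = 1 \/ sg = -1 -> 0 < sg * orient a b c ->
  0 <= sg * orient b c x -> 0 <= sg * orient c a x -> 0 <= sg * orient a b x ->
  in_tri a b c x.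
Proof.
move=> hsg T0 h1 h2 h3; have [al [be [ga [e1 e2 e3 s1 ex]]]] := bary_weights x hsg T0.
by exists al, be, ga; split; rewrite // -(pmulr_lge0 _ T0) ?e1 ?e2 ?e3.
Qed.

Lemma open_triangle_sign (a b c x : pt) : in_open_triangle a b c x ->
  exists2 sg : R, sg = 1 \/ sg = -1 &
    [/\ 0 < sg * orient b c x, 0 < sg * orient c a x & 0 < sg * orient a b x].
Proof.
case=> [[h1 [h2 h3]]|[h1 [h2 h3]]]; [exists 1; [left | ] | exists (-1); [right | ]];
  by rewrite ?mul1r ?mulN1r ?oppr_gt0.
Qed.

Lemma open_triangle_weights (a b c x : pt) : in_open_triangle a b c x ->
  exists al be ga : R, [/\ 0 < al, 0 < be, 0 < ga, al + be + ga = 1 &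
    x = (al * a.1 + be * b.1 + ga * c.1, al * a.2 + be * b.2 + ga * c.2)].
Proof.
case/open_triangle_sign => sg hsg [h1 h2 h3].
have T0 : 0 < sg * orient a b c by rewrite -(orient_sum3 a b c x) mulrDr mulrDr !addr_gt0.
have [al [be [ga [e1 e2 e3 s1 ex]]]] := bary_weights x hsg T0.
by exists al, be, ga; split; rewrite // -(pmulr_lgt0 _ T0) ?e1 ?e2 ?e3.
Qed.

Lemma in_quad_pqs (p q s r x : pt) : in_tri p q s x -> in_quad p q s r x.
Proof.
case=> al [be [ga [h1 h2 h3 h4 ->]]]; exists al, be, ga, 0; do 5 (split; first by lra).
by congr pair; ring.
Qed.

Lemma in_quad_pqr (p q s r x : pt) : in_tri p q r x -> in_quad p q s r x.
Proof.
case=> al [be [ga [h1 h2 h3 h4 ->]]]; exists al, be, 0, ga; do 5 (split; first by lra).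
by congr pair; ring.
Qed.

Lemma in_quad_psr (p q s r x : pt) : in_tri p s r x -> in_quad p q s r x.
Proof.
case=> al [be [ga [h1 h2 h3 h4 ->]]]; exists al, 0, be, ga; do 5 (split; first by lra).
by congr pair; ring.
Qed.

Lemma in_quad_orient_ge0 (p q s r x : pt) k : in_quad p q s r x ->
  0 <= k * orient p q s -> 0 <= k * orient p q r -> 0 <= k * orient p q x.
Proof.
case=> a [b [c [d [a0 [b0 [c0 [d0 [s1 ->]]]]]]]] hs hr.
have -> : k * orient p q (a * p.1 + b * q.1 + c * s.1 + d * r.1,
    a * p.2 + b * q.2 + c * s.2 + d * r.2) = c * (k * orient p q s) + d * (k * orient p q r).
  have -> : a = 1 - b - c - d by lra.
  by rewrite /orient /=; ring.
by apply: addr_ge0; apply: mulr_ge0.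
Qed.

Lemma open_triangle_vertex_gt (a b c x p q : pt) k : in_open_triangle a b c x ->
  k != 0 -> p <> q -> [\/ k * orient p q x < k * orient p q a,
    k * orient p q x < k * orient p q b | k * orient p q x < k * orient p q c].
Proof.
move=> ht k0 pq; have [al [be [ga [al0 be0 ga0 s1 ex]]]] := open_triangle_weights ht.
pose f v := k * orient p q v.
have ga1 : ga = 1 - al - be by lra.
have fx : f x = al * f a + be * f b + ga * f c.
  by rewrite /f ex /orient /= ga1; ring.
have [ha|ha] := ltP (f x) (f a); first by constructor 1.
have [hb|hb] := ltP (f x) (f b); first by constructor 2.
have [hc|hc] := ltP (f x) (f c); first by constructor 3.
have ea : al * (f x - f a) = 0 /\ be * (f x - f b) = 0.
  have ha' : 0 <= al * (f x - f a) by apply: mulr_ge0; [exact: ltW | rewrite subr_ge0].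
  have hb' : 0 <= be * (f x - f b) by apply: mulr_ge0; [exact: ltW | rewrite subr_ge0].
  have hc' : 0 <= ga * (f x - f c) by apply: mulr_ge0; [exact: ltW | rewrite subr_ge0].
  have : al * (f x - f a) + be * (f x - f b) + ga * (f x - f c) = 0.
    by rewrite fx ga1; ring.
  by split; lra.
have same v : 0 < v -> forall y, v * (f x - f y) = 0 -> orient p q y = orient p q x.
  move=> v0 y /eqP; rewrite mulf_eq0 (gt_eqF v0) subr_eq0 => /eqP.
  by rewrite /f => /(mulfI k0).
have oa := same _ al0 _ ea.1; have ob := same _ be0 _ ea.2.
have uv : (p.2 - q.2, q.1 - p.1) != (0, 0).
  apply/negP; rewrite xpair_eqE => /andP [/eqP h1 /eqP h2]; apply: pq.
  by apply: pt_ext; lra.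
have : orient a b x = 0.
  by apply: (orient_level uv); move: oa ob; rewrite /orient => e1 e2; lra.
by case: ht => [[h1 _]|[h1 _]] e; move: h1; rewrite e ltxx.
Qed.

Lemma in_quad_of_sides (p q s r z : pt) (sg : R) : sg = 1 \/ sg = -1 ->
  (q <> s -> 0 < sg * orient p q s) -> (p <> r -> 0 < sg * orient p q r) ->
  (p <> r -> q <> s -> 0 < sg * orient p s r) ->
  0 < sg * orient p q z -> 0 <= sg * orient s r z ->
  (p <> r -> 0 <= sg * orient r p z) -> (q <> s -> 0 <= sg * orient q s z) ->
  in_quad p q s r z.
Proof.
move=> hsg hs hr hd zpq zsr zrp zqs.
have [er|/eqP/nesym pr] := eqVneq r p; have [es|/eqP/nesym qs] := eqVneq s q; subst.
- by move: zsr; rewrite orient_swap mulrN oppr_ge0 leNgt zpq.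
- apply/in_quad_pqs/(in_tri_of_orient hsg (hs qs)); [exact: zqs | exact: zsr | exact: ltW].
- apply/in_quad_pqr/(in_tri_of_orient hsg (hr pr)); [exact: zsr | exact: zrp | exact: ltW].
- have [zps|zps] := leP (sg * orient p s z) 0.
    apply/in_quad_pqs/(in_tri_of_orient hsg (hs qs)); [exact: zqs | | exact: ltW].
    by rewrite orient_swap mulrN oppr_ge0.
  apply/in_quad_psr/(in_tri_of_orient hsg (hd pr qs)); [exact: zsr | exact: zrp | exact: ltW].
Qed.

End Triangles.

Section HullConvexity.
Variables (R : realFieldType) (n : nat) (P : 'I_n -> R * R).
Hypothesis gp : general_position P.
Local Notation pt := (R * R)%type.
Local Notation wpt := (wpt P).
Local Notation conv := (conv P).

Lemma conv_trans (C C' : pt -> Prop) z :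
  conv C z -> (forall x, C x -> conv C' x) -> conv C' z.
Proof.
case=> l [l0 lC l1 ->] hC.
have /choice [mu hmu] : forall i, exists m : 'I_n -> R, l i != 0 ->
    [/\ forall j, 0 <= m j, forall j, m j != 0 -> C' (P j), \sum_j m j = 1 & P i = wpt m].
  move=> i; have [li|/lC /hC [m hm]] := eqVneq (l i) 0; last by exists m.
  by exists (fun=> 0).
have mix (F G : 'I_n -> R) : (forall i, l i != 0 -> \sum_j mu i j * F j = G i) ->
    \sum_j (\sum_i l i * mu i j) * F j = \sum_i l i * G i.
  move=> hG; under eq_bigr do rewrite mulr_suml; rewrite exchange_big /=.
  apply: eq_bigr => i _; have [->|li] := eqVneq (l i) 0.
    by rewrite mul0r big1 // => j _; rewrite !mul0r.
  by rewrite -(hG i li) mulr_sumr; apply: eq_bigr => j _; rewrite mulrA.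
exists (fun j => \sum_i l i * mu i j); split.
- move=> j; apply: sumr_ge0 => i _.
  by have [->|/hmu [mu0 _ _ _]] := eqVneq (l i) 0; rewrite ?mul0r ?mulr_ge0.
- move=> j; have [//|nC] := pselect (C' (P j)); rewrite big1 ?eqxx // => i _.
  have [->|/hmu [_ mC _ _]] := eqVneq (l i) 0; first by rewrite mul0r.
  by have [->|/mC /nC []] := eqVneq (mu i j) 0; rewrite mulr0.
- transitivity (\sum_j (\sum_i l i * mu i j) * 1); first by apply: eq_bigr => j _; rewrite mulr1.
  rewrite (mix _ (fun=> 1)); first by under eq_bigr do rewrite mulr1.
  by move=> i /hmu [_ _ s1 _]; under eq_bigr do rewrite mulr1.
- apply: pt_ext => /=; first by rewrite (mix _ (fun i => (P i).1)) // => i /hmu [_ _ _ ->].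
  by rewrite (mix _ (fun i => (P i).2)) // => i /hmu [_ _ _ ->].
Qed.

Definition on_set (S : {set 'I_n}) (x : pt) : Prop := exists2 i, i \in S & P i = x.

Lemma wpt_unit_weight l y : (forall i, 0 <= l i) -> \sum_i l i = 1 -> l y = 1 -> wpt l = P y.
Proof.
move=> l0 l1 ly.
have l0' i : i != y -> l i = 0.
  have : \sum_(i | i != y) l i = 0 by move: l1; rewrite (bigD1 y) //= ly; lra.
  by move=> h iy; apply: (psumr_eq0P (fun i _ => l0 i) h).
by apply: pt_ext; rewrite /= (bigD1 y) //= ly mul1r big1 ?addr0 // => i /l0' ->; rewrite mul0r.
Qed.

Lemma conv_weight_lt1 (C : pt -> Prop) a y : conv C a -> a <> P y ->
  exists l, [/\ forall i, 0 <= l i, forall i, l i != 0 -> C (P i), \sum_i l i = 1 & a = wpt l]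
            /\ l y < 1.
Proof.
case=> l [l0 lC l1 ea] ay; exists l; split => //.
have ly1 : l y <= 1 by rewrite -l1 (bigD1 y) //= lerDl sumr_ge0.
rewrite lt_neqAle ly1 andbT; apply/eqP => ly; apply: ay; rewrite ea.
exact: wpt_unit_weight.
Qed.

Lemma conv_drop_self S y (k : 'I_n -> R) : (forall i, 0 <= k i) ->
  (forall i, k i != 0 -> on_set S (P i)) -> \sum_i k i = 1 -> P y = wpt k -> k y < 1 ->
  conv (on_set (S :\ y)) (P y).
Proof.
move=> k0 kC k1 ey ky; have d0 : 1 - k y != 0 by rewrite subr_eq0 gt_eqF.
pose k' i := if i == y then 0 else k i / (1 - k y).
have k'E (F : 'I_n -> R) : \sum_i k' i * F i = (\sum_i k i * F i - k y * F y) / (1 - k y).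
  rewrite (bigD1 y) //= [X in (X - _) / _](bigD1 y) //= /k' eqxx mul0r add0r addrAC subrr add0r.
  by rewrite mulr_suml; apply: eq_bigr => i /negbTE ->; rewrite mulrAC.
exists k'; split.
- by move=> i; rewrite /k'; case: ifP => // _; rewrite divr_ge0 // subr_ge0 ltW.
- move=> i; rewrite /k'; have [->|iy] := eqVneq i y; first by rewrite eqxx.
  rewrite mulf_eq0 negb_or => /andP [/kC [j jS ej] _].
  by exists i; rewrite // !inE iy -(gp.1 _ _ ej).
- transitivity (\sum_i k' i * 1); first by apply: eq_bigr => i _; rewrite mulr1.
  by rewrite k'E; under eq_bigr do rewrite mulr1; rewrite k1 mulr1 divff.
- have e1 : \sum_i k i * (P i).1 = (P y).1 by rewrite ey.
  have e2 : \sum_i k i * (P i).2 = (P y).2 by rewrite ey.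
  by apply: pt_ext; rewrite /wpt /= k'E ?e1 ?e2; field.
Qed.

Lemma open_triangle_neq (a b c x : pt) : in_open_triangle a b c x -> [/\ a <> x, b <> x & c <> x].
Proof.
by move=> h; split=> e; subst x; case: h => [[h1 [h2 h3]]|[h1 [h2 h3]]];
  rewrite ?orient_aba ?orient_abb ?ltxx in h1 h2 h3.
Qed.

Lemma conv_remove_interior S y (a b c : pt) : in_open_triangle a b c (P y) ->
  (forall z, inP P z -> conv (on_set S) z) -> inP P a -> inP P b -> inP P c ->
  conv (on_set (S :\ y)) (P y).
Proof.
move=> ht hS ia ib ic; have [na nb nc] := open_triangle_neq ht.
have [al [be [ga [al0 be0 ga0 s1 ey]]]] := open_triangle_weights ht.
have [la [[la0 laC la1 ea] lay]] := conv_weight_lt1 (hS a ia) na.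
have [lb [[lb0 lbC lb1 eb] lby]] := conv_weight_lt1 (hS b ib) nb.
have [lc [[lc0 lcC lc1 ec] lcy]] := conv_weight_lt1 (hS c ic) nc.
apply: (conv_drop_self (k := fun i => al * la i + be * lb i + ga * lc i)).
- by move=> i; rewrite !addr_ge0 // mulr_ge0 // ltW.
- move=> i; have [ha|/laC //] := eqVneq (la i) 0; have [hb|/lbC //] := eqVneq (lb i) 0.
  by have [hc|/lcC //] := eqVneq (lc i) 0; rewrite ha hb hc !mulr0 !addr0 eqxx.
- by rewrite !big_split /= -!mulr_sumr la1 lb1 lc1 !mulr1.
- rewrite ey ea eb ec; apply: pt_ext; rewrite /= !mulr_sumr -!big_split /=;
    by apply: eq_bigr => i _; ring.
- have : al * la y < al * 1 by rewrite ltr_pM2l.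
  have : be * lb y < be * 1 by rewrite ltr_pM2l.
  have : ga * lc y < ga * 1 by rewrite ltr_pM2l.
  lra.
Qed.

(* Peel off the interior points one at a time: each lies in an open triangle of
   points already expressed over the remaining set, so it can be removed from
   the support of every convex combination. *)
Lemma conv_hull_points :
  (forall i, ~ on_hull P (P i) -> exists a b c : pt,
     [/\ inP P a, inP P b, inP P c & in_open_triangle a b c (P i)]) ->
  forall z, inP P z -> conv (on_hull P) z.
Proof.
move=> htri; pose H := [set i | `[< on_hull P (P i) >]].
suff : forall m S, #|S :\: H| = m -> H \subset S ->
    (forall z, inP P z -> conv (on_set S) z) -> forall z, inP P z -> conv (on_set H) z.
  move=> /(_ _ setT erefl (subsetT _)) hH z iz.
  have hz : conv (on_set H) z.
    apply: (hH _ z iz) => x [i <-].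
    by apply: conv_inP; [exists i; rewrite ?in_setT | exists i].
  by apply: conv_mono hz => x [i]; rewrite inE => /asboolP + <-.
elim=> [|m IH] S hm hsub hall.
  suff -> : H = S by [].
  apply/eqP; rewrite eqEsubset hsub /=; apply/subsetP => i iS; apply: contraT => niH.
  by move: hm => /eqP; rewrite cards_eq0 => /eqP /setP /(_ i); rewrite in_setD niH iS in_set0.
have [y yD] : exists y, y \in S :\: H by apply/set0Pn; rewrite -card_gt0 hm.
move: (yD); rewrite inE => /andP [yH yS].
apply: (IH (S :\ y)).
- have -> : (S :\ y) :\: H = (S :\: H) :\ y by apply/setP => i; rewrite !inE andbCA.
  by move: (cardsD1 y (S :\: H)); rewrite yD hm add1n => -[].
- apply/subsetP => i iH; rewrite !inE (subsetP hsub i iH) andbT.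
  by apply: contraTneq iH => ->.
- have hy : conv (on_set (S :\ y)) (P y).
    have [|a [b [c [ia ib ic ht]]]] := htri y; first by move=> h; move: yH; rewrite inE asboolT.
    exact: conv_remove_interior ht hall ia ib ic.
  move=> z iz; apply: (conv_trans (hall z iz)) => x [i iS <-].
  have [->//|iy] := eqVneq i y.
  by apply: conv_inP; [exists i; rewrite // !inE iy | exists i].
Qed.

End HullConvexity.

Fixpoint qsize (R : realFieldType) (t : qtree R) : nat :=
  let: QNode _ _ _ _ l rr := t in
  ((if l is Some tl then qsize tl else 0) + (if rr is Some tr then qsize tr else 0)).+1.

Section Covering.
Variables (R : realFieldType) (n : nat) (P : 'I_n -> R * R).
Hypothesis gp : general_position P.
Local Notation pt := (R * R)%type.

Lemma sign_sqr (sg : R) : sg = 1 \/ sg = -1 -> sg * sg = 1.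
Proof. by case=> ->; rewrite ?mulrNN mulr1. Qed.

Lemma piece_sign_gt0 C p q k (sg : R) x : rooted_piece P C p q k -> sg = 1 \/ sg = -1 ->
  (forall y, C y -> 0 <= sg * orient p q y) -> C x -> x <> p -> x <> q ->
  0 < sg * orient p q x.
Proof.
move=> G hsg hC Cx xp xq; apply: sign_mul_gt0 hsg (hC x Cx) _.
exact: (orient_neq0 gp (piece_inP G (piece_p G)) (piece_inP G (piece_q G)) (piece_inP G Cx)
  (piece_neq G) (nesym xq) (nesym xp)).
Qed.

Lemma child_side C p q k (sg : R) r z : rooted_piece P C p q k -> sg = 1 \/ sg = -1 ->
  (forall y, C y -> 0 <= sg * orient p q y) -> C r -> p <> r -> r <> q ->
  sg * orient r p z < 0 -> 0 < - orient p r q * orient p r z.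
Proof.
move=> G hsg hC Cr pr rq hz; have pos := piece_sign_gt0 G hsg hC Cr (nesym pr) rq.
have -> : - orient p r q * orient p r z = - ((sg * orient p q r) * (sg * orient r p z)).
  by rewrite mulrACA sign_sqr // mul1r /orient; ring.
by rewrite oppr_gt0 pmulr_rlt0.
Qed.

(* A point beyond side pr (resp. qs) of the node's quadrangle is covered by
   the corresponding child; any other point lies in the quadrangle itself. *)
Lemma pop_exists m : forall N : qtree R, (qsize N < m)%N ->
  forall C p q k, qvalid N C p q -> rooted_piece P C p q k ->
  forall z, inP P z -> 0 < k * orient p q z -> exists pi, pop P N pi z.
Proof.
elim: m => // m IH [p' q' s r l rr] /= hsz C p q k [-> [-> [E [hl hr]]]] G z iz dz.
have [Cs [Cr [sr [_ [sg [hsg hE]]]]]] := E.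
have rq := edge_ok_neq gp G E.
have sp := edge_ok_neq gp (rooted_piece_swap G) (edge_ok_swap E).
have cz := piece_conv G iz (ltW dz).
have hpq y : C y -> 0 <= sg * orient p q y by case/hE.
have oz : orient p q z != 0 by apply: contraTneq dz => ->; rewrite mulr0 ltxx.
have [/andP [/eqP pr zrp]|zrp] := boolP ((p != r) && (sg * orient r p z < 0)).
  case: l hl hsz => [tl [_ vtl]|//] hsz.
  have sz : (qsize tl < m)%N by move: hsz; rewrite ltnS; apply: leq_ltn_trans; apply: leq_addr.
  have [pi hpi] := IH tl sz _ _ _ _ vtl (rooted_piece_cut gp G E pr) z iz
    (child_side G hsg hpq Cr pr rq zrp).
  by exists (false :: pi).
have [/andP [/eqP qs zqs]|zqs] := boolP ((q != s) && (sg * orient q s z < 0)).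
  case: rr hr hsz => [tr [_ vtr]|//] hsz.
  have hqp y : C y -> 0 <= - sg * orient q p y by rewrite orient_swap mulrNN; apply: hpq.
  have hnsg : - sg = 1 \/ - sg = -1 by case: hsg => ->; [right | left]; rewrite ?opprK.
  have zsq : - sg * orient s q z < 0 by rewrite orient_swap mulrNN.
  have sz : (qsize tr < m)%N by move: hsz; rewrite ltnS; apply: leq_ltn_trans; apply: leq_addl.
  have [pi hpi] := IH tr sz _ _ _ _ vtr
    (rooted_piece_cut gp (rooted_piece_swap G) (edge_ok_swap E) qs) z iz
    (child_side (rooted_piece_swap G) hnsg hqp Cs qs sp zsq).
  by exists (true :: pi).
exists [::], p, q, s, r, l, rr; do 3 split => //.
apply: (in_quad_of_sides hsg).
- by move=> qs; apply: piece_sign_gt0 G hsg hpq Cs sp (nesym qs).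
- by move=> pr; apply: piece_sign_gt0 G hsg hpq Cr (nesym pr) rq.
- move=> pr qs; rewrite orient_rot; apply: sign_mul_gt0 hsg (hE p (piece_p G)).2 _.
  exact: (orient_neq0 gp (piece_inP G Cs) (piece_inP G Cr) (piece_inP G (piece_p G)) sr
    (nesym pr) sp).
- by apply: sign_mul_gt0 hsg (conv_orient_ge0 cz hpq) oz.
- exact: (conv_orient_ge0 cz (fun y Cy => (hE y Cy).2)).
- by move=> /eqP pr; move: zrp; rewrite pr /= -leNgt.
- by move=> /eqP qs; move: zqs; rewrite qs /= -leNgt.
Qed.

Lemma subtree_cat (t : qtree R) pi1 pi2 N :
  subtree t pi1 = Some N -> subtree t (pi1 ++ pi2) = subtree N pi2.
Proof.
elim: pi1 t => [|b pi1 IH] [p q s r l rr] /=; first by case=> <-.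
by case: (if b then rr else l) => // t'; apply: IH.
Qed.

Lemma subtree_rooted_piece pi : forall (t : qtree R) C p q k,
  qvalid t C p q -> rooted_piece P C p q k ->
  forall p' q' s r l rr, subtree t pi = Some (QNode p' q' s r l rr) ->
  exists C' k', qvalid (QNode p' q' s r l rr) C' p' q' /\ rooted_piece P C' p' q' k'.
Proof.
elim: pi => [|b pi IH] [p0 q0 s0 r0 l0 rr0] C p q k hv G p' q' s r l rr /=.
  by case=> <- <- <- <- <- <-; move: (hv) => /= [e1 [e2 _]]; subst; exists C, k.
move: hv => /= [e1 [e2 [E [hl hr]]]]; subst p0 q0; case: b.
  case: rr0 hr => [tr [qs vtr]|//] /=.
  exact: IH vtr (rooted_piece_cut gp (rooted_piece_swap G) (edge_ok_swap E) qs) _ _ _ _ _ _.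
case: l0 hl => [tl [pr vtl]|//] /=.
exact: IH vtl (rooted_piece_cut gp G E pr) _ _ _ _ _ _.
Qed.

Lemma open_triangle_deeper_pop (t : qtree R) C0 p0 q0 k0 :
  qvalid t C0 p0 q0 -> rooted_piece P C0 p0 q0 k0 ->
  forall pi (x a b c : pt), pop P t pi x -> in_open_triangle a b c x ->
  inP P a -> inP P b -> inP P c ->
  exists y, [\/ y = a, y = b | y = c] /\
    exists pi', pop P t (pi ++ pi') y /\ (pi' = [::] -> deeper t pi x y).
Proof.
move=> hv G pi x a b c [p [q [s [r [l [rr [hs [ix [hq ox]]]]]]]]] ht ia ib ic.
have [C [k [vN GN]]] := subtree_rooted_piece hv G hs.
have [_ [_ [[Cs [Cr _]] _]]] := vN.
have dx : 0 < k * orient p q x.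
  rewrite lt_def mulf_neq0 ?(piece_sign GN) //=.
  exact: in_quad_orient_ge0 hq ((pieceE GN s).1 Cs).2 ((pieceE GN r).1 Cr).2.
have deeper_pop y : inP P y -> k * orient p q x < k * orient p q y ->
    exists pi', pop P t (pi ++ pi') y /\ (pi' = [::] -> deeper t pi x y).
  move=> iy hxy; have dy := lt_trans dx hxy.
  have [pi' hp] := pop_exists (ltnSn _) vN GN iy dy.
  exists pi'; split; first by rewrite /pop (subtree_cat _ hs).
  move=> _; exists p, q, s, r, l, rr; split => //.
  have nk : 0 < `|k| by rewrite normr_gt0 (piece_sign GN).
  by rewrite -(ltr_pM2l nk) -!normrM !gtr0_norm.
case: (open_triangle_vertex_gt ht (piece_sign GN) (piece_neq GN)) => h.
- by exists a; split; [constructor 1 | exact: deeper_pop].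
- by exists b; split; [constructor 2 | exact: deeper_pop].
- by exists c; split; [constructor 3 | exact: deeper_pop].
Qed.

End Covering.

Definition code_from (a : nat) (pi : seq bool) : nat := foldl (fun a (b : bool) => a.*2 + b)%N a pi.

(* Binary numeral with a leading 1, so that distinct paths get distinct codes. *)
Definition code (pi : seq bool) : nat := code_from 1 pi.

Lemma code_from_ge pi a : (a <= code_from a pi)%N.
Proof. by elim: pi a => //= b pi IH a; apply: leq_trans (IH _); rewrite -addnn -addnA leq_addr. Qed.

Lemma code_from_gt pi a : (0 < a)%N -> pi != [::] -> (a < code_from a pi)%N.
Proof.
case: pi => //= b pi a0 _; apply: leq_trans (code_from_ge _ _).
by rewrite -addnn -addnA -addn1 leq_add2l (leq_trans a0) // leq_addr.
Qed.

Lemma code_pos pi : (0 < code pi)%N.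
Proof. exact: code_from_ge. Qed.

Lemma code_cat pi pi' : code (pi ++ pi') = code_from (code pi) pi'.
Proof. by rewrite /code /code_from foldl_cat. Qed.

Lemma code_cat_gt pi pi' : pi' != [::] -> (code pi < code (pi ++ pi'))%N.
Proof. by rewrite code_cat; apply: code_from_gt; apply: code_pos. Qed.

Lemma code_rcons pi b : code (rcons pi b) = ((code pi).*2 + b)%N.
Proof. by rewrite -cats1 code_cat. Qed.

Lemma code_inj : injective code.
Proof.
move=> pi1; elim/last_ind: pi1 => [|pi1 b1 IH] pi2; case/lastP: pi2 => [|pi2 b2] //.
- by rewrite code_rcons => e; have := code_pos pi2; move: e; rewrite /code /= -muln2; lia.
- by rewrite code_rcons => e; have := code_pos pi1; move: e; rewrite /code /= -muln2; lia.
rewrite !code_rcons => e.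
have eb : b1 = b2 by move: e => /(congr1 odd); rewrite !oddD !odd_double; case: b1; case: b2.
subst b2; move/eqP: e; rewrite eqn_add2r -!muln2 eqn_mul2r /= => /eqP e.
by rewrite (IH _ e).
Qed.

Lemma bigmax_attained (T : eqType) (F : T -> nat) (s : seq T) (Q : pred T) :
  (0 < \max_(x <- s | Q x) F x)%N ->
  exists2 x, (x \in s) && Q x & F x = \max_(x <- s | Q x) F x.
Proof.
elim: s => [|y s IH]; first by rewrite big_nil.
rewrite big_cons; case: ifP => Qy.
  have [le|lt] := leqP (\max_(x <- s | Q x) F x) (F y).
    by move=> _; exists y; rewrite ?inE ?eqxx ?Qy // (maxn_idPl le).
  move=> _; have [x /andP [xs Qx] e] := IH (leq_ltn_trans (leq0n _) lt).
  by exists x; rewrite ?inE ?xs ?Qx ?orbT // e (maxn_idPr (ltnW lt)).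
by move=> /IH [x /andP [xs Qx] e]; exists x; rewrite ?inE ?xs ?Qx ?orbT.
Qed.

Section HomeNode.
Variables (R : realFieldType) (n : nat) (P : 'I_n -> R * R) (t : qtree R).
Local Notation pt := (R * R)%type.

Fixpoint paths (u : qtree R) : seq (seq bool) :=
  let: QNode _ _ _ _ l rr := u in
  [::] :: map (cons false) (if l is Some tl then paths tl else [::]) ++
          map (cons true) (if rr is Some tr then paths tr else [::]).

Lemma subtree_paths pi : forall (u : qtree R) N, subtree u pi = Some N -> pi \in paths u.
Proof.
elim: pi => [|b pi IH] [p q s r l rr] N //=; rewrite inE mem_cat.
case: b => /=.
  by case: rr => // tr /IH h; apply/orP; right; apply: map_f.
by case: l => // tl /IH h; rewrite map_f.
Qed.

(* Populations of adjacent nodes overlap along shared edges; the home node of z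
   is the one of largest code whose population contains z. *)
Definition top_code (z : pt) : nat :=
  \max_(pi <- paths t | `[< pop P t pi z >]) code pi.

Definition home (z : pt) : seq bool :=
  nth [::] (paths t)
    (find (fun pi => `[< pop P t pi z >] && (code pi == top_code z)) (paths t)).

Definition home_depth (z : pt) : R :=
  if subtree t (home z) is Some (QNode p q _ _ _ _) then `|orient p q z| else 0.

Definition above (x y : pt) : Prop :=
  (top_code x < top_code y)%N \/ (top_code x = top_code y /\ home_depth x < home_depth y).

Lemma top_code_ge pi z : pop P t pi z -> (code pi <= top_code z)%N.
Proof.
move=> h; have [p [q [s [r [l [rr [hs _]]]]]]] := h.
by apply: (leq_bigmax_seq (F := code)); [exact: subtree_paths hs | apply/asboolP].
Qed.

Lemma home_spec z : (exists pi, pop P t pi z) ->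
  pop P t (home z) z /\ code (home z) = top_code z.
Proof.
case=> pi0 h0; have := leq_trans (code_pos pi0) (top_code_ge h0).
move=> /bigmax_attained [pi /andP [pin Qpi] e].
have hh : has (fun pi => `[< pop P t pi z >] && (code pi == top_code z)) (paths t).
  by apply/hasP; exists pi => //; rewrite Qpi e eqxx.
by have /andP [/asboolP ? /eqP ?] := nth_find [::] hh.
Qed.

Lemma above_trans x y z : above x y -> above y z -> above x z.
Proof.
case=> [h1|[e1 h1]] [h2|[e2 h2]]; rewrite /above.
- by left; apply: ltn_trans h2.
- by left; rewrite -e2.
- by left; rewrite e1.
- by right; split; [rewrite e1 | apply: lt_trans h2].
Qed.

Lemma above_irr x : ~ above x x.
Proof. by case=> [|[_]]; rewrite ?ltnn ?ltxx. Qed.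

Lemma above_step x pi' y : (exists pi, pop P t pi x) ->
  pop P t (home x ++ pi') y -> (pi' = [::] -> deeper t (home x) x y) -> above x y.
Proof.
move=> hx hy hd; have [hpx cx] := home_spec hx; have my := top_code_ge hy.
have [e|ne] := eqVneq pi' [::]; last by left; rewrite -cx; apply: leq_trans my; exact: code_cat_gt.
subst pi'; rewrite cats0 in hy my.
have [lt|gt|eq] := ltngtP (top_code x) (top_code y); first by left.
  by move: my; rewrite cx leqNgt gt.
right; split => //; rewrite /home_depth; have [_ cy] := home_spec (ex_intro (pop P t ^~ y) _ hy).
have -> : home y = home x by apply: code_inj; rewrite cy cx.
by have [p [q [s [r [l [rr [-> hlt]]]]]]] := hd erefl.
Qed.

End HomeNode.

Lemma qprec_extend (R : realFieldType) (n : nat) (P : 'I_n -> R * R) (t : qtree R) pi pi' x y :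
  pop P t pi x -> pop P t (pi ++ pi') y -> (pi' = [::] -> deeper t pi x y) -> qprec P t x y.
Proof.
move=> hx hy hd; exists pi, (pi ++ pi'); do 2 split => //.
have [e|ne] := eqVneq pi' [::]; first by right; subst pi'; rewrite cats0; split => //; apply: hd.
left; split; first exact: prefix_prefix.
move/(congr1 size)/eqP; rewrite size_cat -{1}[size pi]addn0 eqn_add2l eq_sym size_eq0.
exact/negP.
Qed.

Section Encoding.
Variables (R : realFieldType) (n : nat) (P : 'I_n -> R * R) (t : qtree R).
Variable W : 'I_n -> int * int * int.
Hypothesis gp : general_position P.
Variables (p0 q0 : R * R) (k0 : R).
Hypothesis hv0 : qvalid t (on_hull P) p0 q0.
Hypothesis G0 : rooted_piece P (on_hull P) p0 q0 k0.
Hypothesis hall0 : forall i, 0 <= k0 * orient p0 q0 (P i).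

Definition witness_entry (l : 'I_3) (w : int * int * int) : int :=
  if l == 0 :> nat then w.1.1 else if l == 1 :> nat then w.1.2 else w.2.

(* Entries of W are 1-based slots; an out-of-range entry defaults to j. *)
Definition witness_slot (l : 'I_3) (j : 'I_n) : 'I_n :=
  insubd j (absz (witness_entry l (W j))).-1.

Definition pos (sig : {perm 'I_n}) : {perm 'I_n} := (sig^-1)%g.

Definition witness_vertex (sig : {perm 'I_n}) (x : 'I_n) (l : 'I_3) : 'I_n :=
  sig (witness_slot l (pos sig x)).

Definition interior (x : 'I_n) : bool := ~~ `[< on_hull P (P x) >].

Definition good_label (sig : {perm 'I_n}) (x : 'I_n) (l : 'I_3) : Prop :=
  qprec P t (P x) (P (witness_vertex sig x l)) /\ above P t (P x) (P (witness_vertex sig x l)).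

Definition label (sig : {perm 'I_n}) (j : 'I_n) : 'I_3 :=
  odflt ord0 [pick l : 'I_3 | `[< good_label sig (sig j) l >] ].

Definition downdraft (sig : {perm 'I_n}) (x : 'I_n) : 'I_n :=
  if interior x then witness_vertex sig x (label sig (pos sig x)) else x.

Definition fiber_order (sig : {perm 'I_n}) (xy : 'I_n * 'I_n) : bool :=
  [&& interior xy.1, interior xy.2, downdraft sig xy.1 == downdraft sig xy.2
    & (pos sig xy.1 <= pos sig xy.2)%N].

Definition hull_set : {set 'I_n} := [set i | `[< on_hull P (P i) >]].

Definition hull_slot (sig : {perm 'I_n}) (e : 'I_(hull_count P)) : 'I_n :=
  pos sig (@enum_val _ (mem hull_set) e).

Definition encode (sig : {perm 'I_n}) :
  ({ffun 'I_n -> 'I_n} * {ffun 'I_n * 'I_n -> bool}) *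
  ({ffun 'I_n -> 'I_3} * {ffun 'I_(hull_count P) -> 'I_n}) :=
  ((finfun (downdraft sig), finfun (fiber_order sig)),
   (finfun (label sig), finfun (hull_slot sig))).

Lemma posK (sig : {perm 'I_n}) x : sig (pos sig x) = x.
Proof. exact: permKV. Qed.

Lemma posKV (sig : {perm 'I_n}) j : pos sig (sig j) = j.
Proof. exact: permK. Qed.

Lemma interiorP x : reflect (~ on_hull P (P x)) (interior x).
Proof. exact: asboolPn. Qed.

Lemma interiorN x : ~~ interior x -> on_hull P (P x).
Proof. by rewrite negbK => /asboolP. Qed.

Lemma witness_interior (sig : {perm 'I_n}) j : is_witness P W sig ->
  interior (sig j) = (W j != (-1, -1, -1)%R).
Proof.
move=> hw; have [hj|/interiorN hj] := boolP (interior (sig j)); last by rewrite (hw j).1 ?eqxx.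
by case: (hw j) => _ /(_ (elimT (interiorP _) hj)) [ia [ib [ic [-> _]]]].
Qed.

Lemma witness_triangle (sig : {perm 'I_n}) x : is_witness P W sig -> interior x ->
  in_open_triangle (P (witness_vertex sig x ord0)) (P (witness_vertex sig x (inord 1)))
    (P (witness_vertex sig x (inord 2))) (P x).
Proof.
move=> hw /interiorP hx; rewrite -{1}(posK sig x) in hx.
case: (hw (pos sig x)) => _ /(_ hx) [ia [ib [ic [ew]]]]; rewrite posK.
have slotE l (k : 'I_n) : absz (witness_entry l (W (pos sig x))) = k.+1 ->
    witness_slot l (pos sig x) = k.
  by move=> hk; apply: val_inj; rewrite /witness_slot hk /= insubdK //; exact: ltn_ord.
move=> ht; rewrite /witness_vertex (slotE ord0 ia) ?(slotE (inord 1) ib) ?(slotE (inord 2) ic) //;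
  by rewrite /witness_entry ew ?inordK.
Qed.

Lemma interior_pop x : interior x -> exists pi, pop P t pi (P x).
Proof.
move=> /interiorP hx; apply: (pop_exists gp (ltnSn (qsize t)) hv0 G0 (ex_intro _ x erefl)).
rewrite lt_def hall0 andbT mulf_neq0 ?(piece_sign G0) //; apply/eqP => o0.
have [] := orient_eq0_endpoint gp (piece_inP G0 (piece_p G0)) (piece_inP G0 (piece_q G0))
  (ex_intro _ x erefl) (piece_neq G0) o0 => e; apply: hx; rewrite e.
  exact: piece_p G0.
exact: piece_q G0.
Qed.

Lemma good_label_exists (sig : {perm 'I_n}) x : is_witness P W sig -> interior x ->
  exists l, good_label sig x l.
Proof.
move=> hw hx; have [hpx _] := home_spec (interior_pop hx).
have iv l : inP P (P (witness_vertex sig x l)) by eexists.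
have [y [hy [pi' [hpy hd]]]] :=
  open_triangle_deeper_pop gp hv0 G0 hpx (witness_triangle hw hx) (iv _) (iv _) (iv _).
have good : qprec P t (P x) y /\ above P t (P x) y.
  by split; [exact: qprec_extend hpx hpy hd | exact: above_step (interior_pop hx) hpy hd].
by case: hy => e; subst y; eexists; exact: good.
Qed.

Lemma label_good (sig : {perm 'I_n}) x : is_witness P W sig -> interior x ->
  good_label sig x (label sig (pos sig x)).
Proof.
move=> hw hx; rewrite /label posK; case: pickP => [l /asboolP //|none].
by have [l /asboolP] := good_label_exists hw hx; rewrite none.
Qed.

Lemma encode_downdraft (sig : {perm 'I_n}) : is_witness P W sig ->
  ord_downdraft P t (encode sig).1.
Proof.
move=> hw; rewrite /ord_downdraft /encode /=.
have ti i : ~ on_hull P (P i) -> interior i by move/interiorP.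
split; first by move=> i /ti hi; rewrite ffunE /downdraft hi; exact: (label_good hw hi).1.
split; first by move=> i hi; rewrite ffunE /downdraft; case: interiorP.
split.
  move=> i j; rewrite ffunE /fiber_order /= => /and4P [/interiorP hi /interiorP hj /eqP he _].
  by rewrite !ffunE.
move=> i j k /ti hi /ti hj /ti hk; rewrite !ffunE /fiber_order /= hi hj hk => -> ->.
rewrite !eqxx /=; split=> //.
- by move=> h1 h2; apply/(@perm_inj _ (pos sig))/val_inj/eqP; rewrite eqn_leq h1 h2.
- exact: leq_trans.
- by case: (leqP (pos sig i) (pos sig j)) => h; [left | right; apply: ltnW].
Qed.

Lemma downdraft_pos (sig : {perm 'I_n}) x : interior x ->
  pos sig (downdraft sig x) = witness_slot (label sig (pos sig x)) (pos sig x).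
Proof. by move=> hx; rewrite /downdraft hx posKV. Qed.

Lemma encode_eqP (sA sB : {perm 'I_n}) : encode sA = encode sB ->
  [/\ downdraft sA =1 downdraft sB, fiber_order sA =1 fiber_order sB,
      label sA =1 label sB & hull_slot sA =1 hull_slot sB].
Proof.
move=> e; split=> x.
- by have /ffunP /(_ x) := congr1 (fun d => d.1.1) e; rewrite !ffunE.
- by have /ffunP /(_ x) := congr1 (fun d => d.1.2) e; rewrite !ffunE.
- by have /ffunP /(_ x) := congr1 (fun d => d.2.1) e; rewrite !ffunE.
- by have /ffunP /(_ x) := congr1 (fun d => d.2.2) e; rewrite !ffunE.
Qed.

(* Once the slot of y is known, the encoding forces the slots of the fiber of y:
   the point sitting under sB in an earlier slot of the fiber would also precede
   x in the common fiber order. *)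
Lemma fiber_slot_ge (sA sB : {perm 'I_n}) y : is_witness P W sA -> is_witness P W sB ->
  encode sA = encode sB -> pos sA y = pos sB y ->
  forall m x, (pos sB x < m)%N -> interior x -> downdraft sA x = y ->
  (pos sB x <= pos sA x)%N.
Proof.
move=> wA wB /encode_eqP [downdraftAB orderAB labelAB _] ey.
elim=> // m IH x hm hx hxy; rewrite leqNgt; apply/negP => hlt.
set i := pos sA x in hlt; set x2 := sB i.
have hx2 : interior x2 by rewrite /x2 (witness_interior _ wB) -(witness_interior _ wA) posK.
have p2 : pos sB x2 = i by rewrite posKV.
have hx2y : downdraft sB x2 = y.
  apply: (@perm_inj _ (pos sB)); rewrite downdraft_pos // p2 -labelAB -ey -hxy.
  by rewrite downdraft_pos.
have : fiber_order sB (x2, x).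
  by rewrite /fiber_order /= hx2 hx hx2y -downdraftAB hxy eqxx p2 (ltnW hlt).
rewrite -orderAB => /and4P [_ _ _ hle].
have nx : x2 != x by apply: contraTneq hlt => <-; rewrite p2 ltnn.
have hlt2 : (pos sA x2 < i)%N.
  by rewrite ltn_neqAle hle andbT; apply: contra nx => /eqP /val_inj /perm_inj ->.
have lt2 : (pos sB x2 < m)%N by rewrite p2; lia.
by have := IH x2 lt2 hx2; rewrite downdraftAB hx2y p2 leqNgt hlt2 => /(_ erefl).
Qed.

Definition rank (x : 'I_n) : nat := #|[set z | `[< above P t (P x) (P z) >] ]|.

Lemma rank_lt x y : above P t (P x) (P y) -> (rank y < rank x)%N.
Proof.
move=> hxy; apply: proper_card; rewrite properE; apply/andP; split.
  by apply/subsetP => z; rewrite !inE => /asboolP h; apply/asboolP; apply: above_trans hxy h.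
by apply/subsetPn; exists y; rewrite !inE; apply/asboolP => //; apply: above_irr.
Qed.

Lemma encode_inj (sA sB : {perm 'I_n}) : is_witness P W sA -> is_witness P W sB ->
  encode sA = encode sB -> sA = sB.
Proof.
move=> wA wB e; have [dAB _ _ hAB] := encode_eqP e.
suff hpos m x : (rank x < m)%N -> pos sA x = pos sB x.
  by apply/permP => j; have := hpos _ (sA j) (ltnSn _); rewrite posKV => ej; rewrite {2}ej posK.
elim: m x => // m IH x hm; have [hx|/interiorN hx] := boolP (interior x); last first.
  have xH : x \in hull_set by rewrite inE; apply/asboolP.
  by have := hAB (enum_rank_in xH x); rewrite /hull_slot enum_rankK_in.
have hxy : above P t (P x) (P (downdraft sA x)).
  by rewrite /downdraft hx; exact: (label_good wA hx).2.
have ey := IH _ (leq_trans (rank_lt hxy) hm).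
apply/ord_inj/eqP; rewrite eqn_leq (fiber_slot_ge wA wB e ey (ltnSn _) hx erefl) andbT.
by apply: (fiber_slot_ge wB wA (esym e) (esym ey) (ltnSn _) hx); rewrite -dAB.
Qed.

Lemma card_witness_arrays :
  (Vcard P W <= ODcard P t * 3 ^ n * n ^ hull_count P)%N.
Proof.
rewrite /Vcard; set V := [set sig | _].
have inj : {in V &, injective encode}.
  by move=> s1 s2; rewrite !inE => /asboolP w1 /asboolP w2; apply: encode_inj.
rewrite -(card_in_imset inj) /ODcard.
set OD := [set d | `[< ord_downdraft P t d >] ].
apply: leq_trans (subset_leq_card (_ : _ \subset setX OD setT)) _.
  apply/subsetP => _ /imsetP [s sV ->]; rewrite in_setX in_setT andbT inE.
  by apply/asboolP; apply: encode_downdraft; move: sV; rewrite inE => /asboolP.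
by rewrite cardsX cardsT card_prod !card_ffun !card_ord mulnA.
Qed.

End Encoding.

Lemma witness_open_triangles (R : realFieldType) (n : nat) (P : 'I_n -> R * R)
    (W : 'I_n -> int * int * int) (sig : {perm 'I_n}) :
  is_witness P W sig -> forall i, ~ on_hull P (P i) ->
  exists a b c : R * R, [/\ inP P a, inP P b, inP P c & in_open_triangle a b c (P i)].
Proof.
move=> hw i /(introT (interiorP _ _)) hi; have ht := witness_triangle hw hi.
by do 3 eexists; split; [eexists | eexists | eexists | exact: ht].
Qed.

Lemma hull_edge_rooted_piece (R : realFieldType) (n : nat) (P : 'I_n -> R * R) (p q : R * R) :
  hull_edge P p q -> (forall z, inP P z -> conv P (on_hull P) z) ->
  exists k, rooted_piece P (on_hull P) p q k /\ forall i, 0 <= k * orient p q (P i).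
Proof.
move=> [Hp [Hq [pq [sg [hsg hall]]]]] hconv; exists sg; split => //.
constructor => // [|x|z iz _]; [exact: sign_neq0 | | exact: hconv].
by split=> [Hx|[]//]; split=> //; case: Hx => -[i <-].
Qed.

Theorem corollary5p4 (R : realFieldType) (n : nat) (P : 'I_n -> R * R)
    (t : qtree R) :
  general_position P -> qtree_for P t ->
  forall W : 'I_n -> int * int * int,
    (Vcard P W <= ODcard P t * 3 ^ n * n ^ hull_count P)%N.
Proof.
move=> gp [p [q [he hv]]] W.
have [->//|/card_gt0P [sig0]] := posnP (Vcard P W); rewrite inE => /asboolP w0.
have hconv := conv_hull_points gp (witness_open_triangles w0).
have [k [G hall]] := hull_edge_rooted_piece he hconv.
exact (card_witness_arrays W gp hv G hall).
Qed.
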